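(* Let $\mathcal I'$ be an SMI instance, $a^*$ an agent, and let $\mathcal I^{a^*}$ be the instance arising from $\mathcal I'$ by replacing the preference list of $a^*$ by an arbitrary strict order over an arbitrary set of agents of the opposite gender (reordering and extending it arbitrarily). Then there is at most one man $m$ and at most one woman $w$ such that $m,w\notin\mathrm{ma}(\mathcal I')$ and $m,w\in\mathrm{ma}(\mathcal I^{a^*})$.
   Context: In a Stable Marriage with Incomplete Lists (SMI) instance there are men $U$ and women $W$, and each agent has a strict preference list over a subset of the agents of opposite gender; $m,w$ are mutually acceptable if each appears in the other's list. A matching is a set of mutually acceptable man–woman pairs in which each agent appears at most once. A mutually acceptable pair $\{m,w\}$ blocks a matching $M$ if ($m$ is unassigned or prefers $w$ to his partner) and ($w$ is unassigned or prefers $m$ to her partner); $M$ is stable if no pair blocks it. By the Rural Hospitals Theorem all stable matchings of an SMI instance assign the same set of agents; $\mathrm{ma}(\mathcal I)$ denotes this set of agents matched in the stable matchings of $\mathcal I$. *)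

From mathcomp Require Import all_boot.
Set Implicit Arguments. Unset Strict Implicit. Unset Printing Implicit Defensive.

(* An SMI instance with men U and women W: each agent has a strict preference
   list (a duplicate-free sequence, most preferred first) over a subset of the
   agents of the opposite gender. *)
Record SMI (U W : finType) := mkSMI {
  prefU : U -> seq W;
  prefW : W -> seq U
}.

Section SMIdefs.
Variables (U W : finType) (I : SMI U W).

Definition wf_SMI : Prop :=
  (forall m, uniq (prefU I m)) /\ (forall w, uniq (prefW I w)).

Definition acceptable (m : U) (w : W) : bool :=
  (w \in prefU I m) && (m \in prefW I w).

Definition man_prefers (m : U) (w w' : W) : bool :=
  (w \in prefU I m) && (index w (prefU I m) < index w' (prefU I m)).
Definition woman_prefers (w : W) (m m' : U) : bool :=
  (m \in prefW I w) && (index m (prefW I w) < index m' (prefW I w)).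

Definition is_matching (M : {set U * W}) : Prop :=
  [/\ forall p, p \in M -> acceptable p.1 p.2,
      forall m w w', (m, w) \in M -> (m, w') \in M -> w = w'
    & forall m m' w, (m, w) \in M -> (m', w) \in M -> m = m'].

Definition man_matched (M : {set U * W}) (m : U) : Prop := exists w, (m, w) \in M.
Definition woman_matched (M : {set U * W}) (w : W) : Prop := exists m, (m, w) \in M.

Definition blocks (M : {set U * W}) (m : U) (w : W) : Prop :=
  [/\ acceptable m w,
      ~ man_matched M m \/ (exists w', (m, w') \in M /\ man_prefers m w w')
    & ~ woman_matched M w \/ (exists m', (m', w) \in M /\ woman_prefers w m m')].

Definition stable (M : {set U * W}) : Prop :=
  is_matching M /\ forall m w, ~ blocks M m w.

(* ma(I): agents matched in the stable matchings of I (by the Rural Hospitals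
   theorem this set is the same for every stable matching). *)
Definition ma_man (m : U) : Prop := exists M, stable M /\ man_matched M m.
Definition ma_woman (w : W) : Prop := exists M, stable M /\ woman_matched M w.

End SMIdefs.

Definition differ_in_one_agent (U W : finType) (I1 I2 : SMI U W) : Prop :=
  (exists a : U, (forall m, m != a -> prefU I2 m = prefU I1 m) /\
                 (forall w, prefW I2 w = prefW I1 w)) \/
  (exists a : W, (forall w, w != a -> prefW I2 w = prefW I1 w) /\
                 (forall m, prefU I2 m = prefU I1 m)).

(* Fix stable matchings M' of I' (which exist by Gale-Shapley) and M of Ia.
   From a man m1 unmatched in M' but matched in M, follow the alternating path
   m1 -M- w1 -M'- m2 -M- w2 -M'- ...  As long as no agent whose list differs is
   met, stability of M' and of M (whose lists agree there) shows that each
   man on the path desires his M-partner in (I', M'), so the path continues.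
   The path is injective (successors are unique and m1 has no predecessor), so
   by finiteness it reaches a "bad" man: a itself, or the M-partner of a.
   There is at most one bad man, and paths from distinct starting men never
   meet, so at most one man is newly matched.  Newly matched in the sense of
   ma(.) reduces to a single stable matching M of Ia by the Rural Hospitals
   theorem, itself the special case of the path argument with no bad agents.
   The women's half follows by exchanging the roles of men and women. *)

From mathcomp Require Import all_boot zify.
From Stdlib Require Import Classical.
Set Implicit Arguments. Unset Strict Implicit. Unset Printing Implicit Defensive.

Lemma index_lt_of_not_lt (T : eqType) (s : seq T) x y :
  x \in s -> y \in s -> x != y -> ~~ (index y s < index x s) -> index x s < index y s.
Proof.
move=> xs ys neq; rewrite -leqNgt leq_eqVlt => /orP[/eqP e|//].
by rewrite (index_inj x xs ys e) eqxx in neq.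
Qed.

Section StableMatchings.
Variables (U W : finType) (I : SMI U W) (M : {set U * W}).
Hypothesis stableM : stable I M.

Definition man_desires (m : U) (w : W) : Prop :=
  ~ man_matched M m \/ exists w', (m, w') \in M /\ man_prefers I m w w'.
Definition woman_desires (w : W) (m : U) : Prop :=
  ~ woman_matched M w \/ exists m', (m', w) \in M /\ woman_prefers I w m m'.

Lemma stable_acceptable m w : (m, w) \in M -> acceptable I m w.
Proof. by case: stableM => -[acc _ _] _ /acc. Qed.

Lemma stable_man_unique m w w' : (m, w) \in M -> (m, w') \in M -> w = w'.
Proof. by case: stableM => -[_ uniq_m _] _; apply: uniq_m. Qed.

Lemma stable_woman_unique m m' w : (m, w) \in M -> (m', w) \in M -> m = m'.
Proof. by case: stableM => -[_ _ uniq_w] _; apply: uniq_w. Qed.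

Lemma stable_woman_defends m w : acceptable I m w -> man_desires m w ->
  exists2 m', (m', w) \in M & woman_prefers I w m' m.
Proof.
move=> mw des; have noblock := stableM.2 m w.
have [m' m'w | unmatched] := pickP (fun m' => (m', w) \in M); last first.
  by case: noblock; split => //; left => -[m']; rewrite unmatched.
exists m' => //; have /andP[_ m'_in] := stable_acceptable m'w.
have m'_ne_m : m' != m.
  apply/eqP => eq_m; subst m'.
  case: des => [[]|[w' [mw' /andP[_ lt_w]]]]; first by exists w.
  by rewrite (stable_man_unique m'w mw') ltnn in lt_w.
have /andP[_ m_in] := mw; apply/andP; split => //.
apply: index_lt_of_not_lt => //; apply/negP => lt_m; apply: noblock.
by split => //; right; exists m'; split => //; apply/andP.
Qed.

Lemma stable_man_defends m w : acceptable I m w -> woman_desires w m ->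
  exists2 w', (m, w') \in M & man_prefers I m w' w.
Proof.
move=> mw des; have noblock := stableM.2 m w.
have [w' mw' | unmatched] := pickP (fun w' => (m, w') \in M); last first.
  by case: noblock; split => //; left => -[w']; rewrite unmatched.
exists w' => //; have /andP[w'_in _] := stable_acceptable mw'.
have w'_ne_w : w' != w.
  apply/eqP => eq_w; subst w'.
  case: des => [[]|[m' [m'w /andP[_ lt_m]]]]; first by exists m.
  by rewrite (stable_woman_unique m'w mw') ltnn in lt_m.
have /andP[w_in _] := mw; apply/andP; split => //.
apply: index_lt_of_not_lt => //; apply/negP => lt_w; apply: noblock.
by split => //; right; exists w'; split => //; apply/andP.
Qed.

End StableMatchings.

Section GaleShapley.
Variables (U W : finType) (I : SMI U W).
Hypothesis wfI : wf_SMI I.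
Implicit Types (k : U -> nat) (m : U) (w : W).

(* A state of the men-proposing deferred acceptance algorithm is the vector k
   of rejection counts: man m currently proposes to the (k m)-th woman on his
   list, if there is one. *)
Definition proposal k m : option W := onth (prefU I m) (k m).
Definition proposes k w m : bool := (proposal k m == Some w) && (m \in prefW I w).
Definition holds k w m : bool :=
  proposes k w m &&
  [forall m', proposes k w m' ==> (index m (prefW I w) <= index m' (prefW I w))].
Definition rejected k m : bool :=
  if proposal k m is Some w then ~~ holds k w m else false.
Definition advance k m0 : U -> nat :=
  fun m => if m == m0 then (k m).+1 else k m.
Definition matching_of k : {set U * W} := [set p | proposal k p.1 == Some p.2].

Definition GS_inv k : Prop := forall m w,
  w \in prefU I m -> index w (prefU I m) < k m -> m \in prefW I w ->
  exists2 m', proposes k w m' & index m' (prefW I w) < index m (prefW I w).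

(* Termination measure: the number of women still to be proposed to. *)
Definition remaining k : nat := \sum_m (size (prefU I m) - k m).

(* The current proposal of m is his (k m)-th choice; lists have no repeats. *)
Lemma proposalP k m w : proposal k m = Some w ->
  [/\ w \in prefU I m, k m < size (prefU I m) & index w (prefU I m) = k m].
Proof.
move=> e; have lt_k : k m < size (prefU I m) by rewrite -onthTE /proposal in e *; rewrite e.
have nth_k : nth w (prefU I m) (k m) = w by apply: onth_nth.
split => //; first by rewrite -nth_k mem_nth.
by rewrite -[in LHS]nth_k index_uniq //; case: wfI.
Qed.

Lemma holds_proposes k w m : holds k w m -> proposes k w m.
Proof. by case/andP. Qed.

Lemma holds_best k w m m' : holds k w m -> proposes k w m' ->
  index m (prefW I w) <= index m' (prefW I w).
Proof. by case/andP => _ /forallP /(_ m') /implyP; apply. Qed.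

Lemma rejected_outbid k m w : proposal k m = Some w -> ~~ holds k w m ->
  m \in prefW I w ->
  exists2 m', proposes k w m' & index m' (prefW I w) < index m (prefW I w).
Proof.
move=> e not_held m_in; have p : proposes k w m by rewrite /proposes e eqxx.
move: not_held; rewrite /holds p /= => /forallPn [m' /=].
by rewrite negb_imply => /andP[p' lt_m]; exists m'; rewrite // ltnNge.
Qed.

Section Terminal.
Variable k : U -> nat.
Hypothesis none_rejected : forall m, ~~ rejected k m.

Lemma terminal_holds m w : proposal k m = Some w -> holds k w m.
Proof. by move=> e; move: (none_rejected m); rewrite /rejected e negbK. Qed.

Lemma in_matching_of m w : ((m, w) \in matching_of k) = (proposal k m == Some w).
Proof. by rewrite inE. Qed.

Lemma matching_of_matching : is_matching I (matching_of k).
Proof.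
split.
- case=> m w; rewrite in_matching_of => /eqP e.
  have /andP[_ m_in] := holds_proposes (terminal_holds e).
  by have [w_in _ _] := proposalP e; apply/andP.
- by move=> m w w'; rewrite !in_matching_of => /eqP -> /eqP [].
move=> m m' w; rewrite !in_matching_of => /eqP e /eqP e'.
have h := terminal_holds e; have h' := terminal_holds e'.
have le1 := holds_best h (holds_proposes h').
have le2 := holds_best h' (holds_proposes h).
have /andP[_ m_in] := holds_proposes h; have /andP[_ m'_in] := holds_proposes h'.
by apply: (index_inj m m_in m'_in); apply/eqP; rewrite eqn_leq le1 le2.
Qed.

Lemma matching_of_stable : GS_inv k -> stable I (matching_of k).
Proof.
move=> inv; split; first exact: matching_of_matching.
move=> m w [/andP[w_in m_in] m_des w_des].
have passed : index w (prefU I m) < k m.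
  case: m_des => [unmatched | [w' [mw' /andP[_ lt_w]]]].
    case e: (proposal k m) => [w'|].
      by case: unmatched; exists w'; rewrite in_matching_of e.
    have : ~~ onth (prefU I m) (k m) by rewrite /proposal in e; rewrite e.
    by rewrite onthNE; apply: leq_trans; rewrite index_mem.
  by move: mw'; rewrite in_matching_of => /eqP /proposalP [_ _ <-].
have [m' p' lt_m'] := inv m w w_in passed m_in.
case: w_des => [unmatched | [m'' [m''w /andP[_ lt_m'']]]].
  by case: unmatched; exists m'; rewrite in_matching_of; case/andP: p'.
move: m''w; rewrite in_matching_of => /eqP /terminal_holds /holds_best /(_ p').
lia.
Qed.

End Terminal.

Lemma proposes_advance k m0 w m : m != m0 ->
  proposes (advance k m0) w m = proposes k w m.
Proof. by move=> ne; rewrite /proposes /proposal /advance (negbTE ne). Qed.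

Lemma advance_inv k m0 : rejected k m0 -> GS_inv k -> GS_inv (advance k m0).
Proof.
rewrite /rejected; case e0: (proposal k m0) => [w0|] // not_held inv.
have survives : forall w i,
    (exists2 m', proposes k w m' & index m' (prefW I w) < i) ->
    exists2 m', proposes (advance k m0) w m' & index m' (prefW I w) < i.
  move=> w i [m' p' lt_m'].
  have [eq_m|ne] := eqVneq m' m0; last by exists m'; rewrite ?proposes_advance.
  subst m'; move: (p') => /andP[/eqP]; rewrite e0 => -[eq_w] m0_in; subst w.
  have [m'' p'' lt_m''] := rejected_outbid e0 not_held m0_in.
  have ne : m'' != m0 by apply: contraTneq lt_m'' => ->; rewrite ltnn.
  by exists m''; rewrite ?proposes_advance //; apply: ltn_trans lt_m'.
move=> m w w_in; rewrite /advance; have [eq_m | ne] := eqVneq m m0 => lt_w m_in.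
  2: by apply: survives; apply: inv.
subst m0.
apply: survives; move: lt_w; rewrite ltnS leq_eqVlt => /orP[/eqP eq_w | lt_w].
  have [w0_in _ idx_w0] := proposalP e0.
  have eq_w0 : w = w0 by apply: (index_inj w w_in w0_in); rewrite eq_w idx_w0.
  subst w.
  exact: rejected_outbid e0 not_held m_in.
exact: inv.
Qed.

Lemma advance_remaining k m0 : rejected k m0 -> remaining (advance k m0) < remaining k.
Proof.
rewrite /rejected; case e0: (proposal k m0) => [w0|] // _.
have [_ lt_k _] := proposalP e0.
rewrite /remaining (bigD1 m0) //= [X in _ < X](bigD1 m0) //= /advance eqxx.
rewrite (eq_bigr (fun m => size (prefU I m) - k m)) => [|m ne]; last by rewrite (negbTE ne).
by rewrite ltn_add2r; lia.
Qed.

Lemma stable_exists : exists M, stable I M.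
Proof.
suff run : forall n k, remaining k < n -> GS_inv k -> exists M, stable I M.
  by apply: (run (remaining (fun=> 0)).+1) => // m w _; rewrite ltn0.
elim=> [//|n IH] k lt_n inv.
have [m0 rej | none_rejected] := pickP (rejected k).
  by apply: (IH (advance k m0)); [have := advance_remaining rej; lia | exact: advance_inv].
by exists (matching_of k); apply: matching_of_stable => // m; rewrite none_rejected.
Qed.

End GaleShapley.

Section AlternatingPaths.
Variables (U W : finType) (I1 I2 : SMI U W) (M1 M2 : {set U * W}).
Hypotheses (stable1 : stable I1 M1) (stable2 : stable I2 M2).
Variables (badU : pred U) (badW : pred W).
Hypotheses (sameU : forall m, ~~ badU m -> prefU I2 m = prefU I1 m)
           (sameW : forall w, ~~ badW w -> prefW I2 w = prefW I1 w).

Lemma alternating_step m w : (m, w) \in M2 -> man_desires I1 M1 m w ->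
  ~~ badU m -> ~~ badW w ->
  exists2 m', (m', w) \in M1 &
    (~~ badU m' -> exists2 w', (m', w') \in M2 & man_desires I1 M1 m' w').
Proof.
move=> mw des good_m good_w.
have acc1 : acceptable I1 m w.
  by have := stable_acceptable stable2 mw; rewrite /acceptable sameU // sameW.
have [m' m'w pref1] := stable_woman_defends stable1 acc1 des.
exists m' => // good_m'.
have acc2 : acceptable I2 m' w.
  by have := stable_acceptable stable1 m'w; rewrite /acceptable sameU // sameW.
have w_des : woman_desires I2 M2 w m'.
  by right; exists m; split => //; rewrite /woman_prefers sameW.
have [w' m'w' pref2] := stable_man_defends stable2 acc2 w_des.
exists w' => //; right; exists w; split => //.
by move: pref2; rewrite /man_prefers sameU.
Qed.

Definition succ (m : U) : option U :=
  if [pick w | (m, w) \in M2] is Some w then [pick m' | (m', w) \in M1] else None.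

Lemma succP m m' : succ m = Some m' <-> exists w, (m, w) \in M2 /\ (m', w) \in M1.
Proof.
split.
  rewrite /succ; case: pickP => // w mw; case: pickP => // m'' m''w [<-].
  by exists w.
move=> [w [mw m'w]]; rewrite /succ.
case: pickP => [w0 mw0 | /(_ w)]; last by rewrite mw.
rewrite (stable_man_unique stable2 mw0 mw).
case: pickP => [m0 m0w | /(_ m')]; last by rewrite m'w.
by rewrite (stable_woman_unique stable1 m0w m'w).
Qed.

Lemma succ_inj m1 m2 m' : succ m1 = Some m' -> succ m2 = Some m' -> m1 = m2.
Proof.
move=> /succP [w [m1w m'w]] /succP [w' [m2w' m'w']].
rewrite (stable_man_unique stable1 m'w m'w') in m1w.
exact: (stable_woman_unique stable2 m1w m2w').
Qed.

Lemma succ_unmatched m m' : ~ man_matched M1 m -> succ m' = Some m -> False.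
Proof. by move=> unmatched /succP [w [_ mw]]; apply: unmatched; exists w. Qed.

Definition path (m : U) (n : nat) : option U := iter n (obind succ) (Some m).

Lemma pathS m n : path m n.+1 = obind succ (path m n).
Proof. by []. Qed.

(* Since succ is injective, two paths through a common point are tails of
   each other. *)
Lemma path_tail a b i j z : path a i = Some z -> path b j = Some z -> i <= j ->
  path b (j - i) = Some a.
Proof.
elim: i j z => [|i IH] j z; first by rewrite subn0 => -[->].
case: j => // j; rewrite !pathS subSS ltnS.
case ea: (path a i) => [u|] //= su; case eb: (path b j) => [v|] //= sv le.
by apply: (IH j v) => //; rewrite ea (succ_inj su sv).
Qed.

Lemma path_meet a b i j z : ~ man_matched M1 a ->
  path a i = Some z -> path b j = Some z -> i <= j -> a = b /\ i = j.
Proof.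
move=> unmatched ea eb le; have := path_tail ea eb le.
case e: (j - i) => [|d]; first by move=> [<-]; split => //; lia.
by rewrite pathS; case: (path b d) => [u|] //= /(succ_unmatched unmatched).
Qed.

Definition Bad (m : U) : bool := badU m || [exists w, ((m, w) \in M2) && badW w].

Lemma path_invariant m1 w1 : ~ man_matched M1 m1 -> (m1, w1) \in M2 -> forall n,
  (exists j p, path m1 j = Some p /\ Bad p) \/
  (exists p w, [/\ path m1 n = Some p, (p, w) \in M2 & man_desires I1 M1 p w]).
Proof.
move=> unmatched m1w1; elim=> [|n [bad | [p [w [e pw des]]]]]; [|by left|].
  by right; exists m1, w1; split => //; left.
have [bad_p | /norP [good_p /existsPn good_w]] := boolP (Bad p).
  by left; exists n, p.
have {}good_w : ~~ badW w by move: (good_w w); rewrite pw.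
have [m' m'w cont] := alternating_step pw des good_p good_w.
have e' : path m1 n.+1 = Some m' by rewrite pathS e /=; apply/succP; exists w.
have [bad_m' | good_m'] := boolP (badU m').
  by left; exists n.+1, m'; rewrite /Bad bad_m'.
by have [w' m'w' des'] := cont good_m'; right; exists m', w'.
Qed.

Lemma path_reaches_bad m1 : ~ man_matched M1 m1 -> man_matched M2 m1 ->
  exists j p, path m1 j = Some p /\ Bad p.
Proof.
move=> unmatched [w1 m1w1]; apply: NNPP => no_bad.
have defined n : exists p, path m1 n = Some p.
  case: (path_invariant unmatched m1w1 n) => [//|[p [w [e _ _]]]].
  by exists p.
pose f (i : 'I_#|U|.+1) := odflt m1 (path m1 i).
suff /leq_card : injective f by rewrite card_ord ltnn.
move=> i j; rewrite /f; have [p ep] := defined i; have [q eq] := defined j.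
rewrite ep eq /= => epq; subst q; apply: val_inj => /=.
have [le | lt] := leqP i j; first by case: (path_meet unmatched ep eq le).
by case: (path_meet unmatched eq ep (ltnW lt)).
Qed.

Lemma new_man_unique m1 m2 :
  (forall p q, Bad p -> Bad q -> p = q) ->
  ~ man_matched M1 m1 -> man_matched M2 m1 ->
  ~ man_matched M1 m2 -> man_matched M2 m2 -> m1 = m2.
Proof.
move=> bad_unique un1 in1 un2 in2.
have [j1 [p1 [e1 bad1]]] := path_reaches_bad un1 in1.
have [j2 [p2 [e2 bad2]]] := path_reaches_bad un2 in2.
rewrite -(bad_unique _ _ bad1 bad2) in e2.
have [le | lt] := leqP j1 j2; first by case: (path_meet un1 e1 e2 le).
by case: (path_meet un2 e2 e1 (ltnW lt)).
Qed.

End AlternatingPaths.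

(* Rural Hospitals theorem for men: all stable matchings of one instance match
   the same men (the case of no bad agents). *)
Lemma rural_hospitals_men (U W : finType) (I : SMI U W) (M1 M2 : {set U * W}) m :
  stable I M1 -> stable I M2 -> man_matched M2 m -> man_matched M1 m.
Proof.
move=> stable1 stable2 matched2; apply: NNPP => unmatched1.
have [j [p [_]]] := path_reaches_bad stable1 stable2 (badU := pred0) (badW := pred0)
  (fun _ _ => erefl) (fun _ _ => erefl) unmatched1 matched2.
by rewrite /Bad /=; case/existsP => w; rewrite andbF.
Qed.

(* The men half of the theorem: changing the list of a single agent a makes at
   most one man newly matched.  The only bad man is a itself (if a is a man),
   resp. the partner of a (if a is a woman). *)
Lemma new_matched_man_unique (U W : finType) (I' Ia : SMI U W) :
  wf_SMI I' -> differ_in_one_agent I' Ia -> forall m1 m2 : U,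
  ~ ma_man I' m1 -> ma_man Ia m1 -> ~ ma_man I' m2 -> ma_man Ia m2 -> m1 = m2.
Proof.
move=> wf' diff m1 m2 new1 [Ma [stable_a in1]] new2 [Mb [stable_b in2]].
have [M' stable'] := stable_exists wf'.
have un1 : ~ man_matched M' m1 by move=> h; apply: new1; exists M'.
have un2 : ~ man_matched M' m2 by move=> h; apply: new2; exists M'.
have {}in2 : man_matched Ma m2 := rural_hospitals_men stable_a stable_b in2.
case: diff => [[a [sameU sameW]] | [a [sameW sameU]]].
- have sameW' (w : W) : ~~ pred0 w -> prefW Ia w = prefW I' w by move=> _; apply: sameW.
  apply: (new_man_unique stable' stable_a sameU sameW' _ un1 in1 un2 in2) => p q.
  have no_w r : [exists w, ((r, w) \in Ma) && pred0 w] = false.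
    by apply/existsPn => w; rewrite andbF.
  by rewrite /Bad !no_w !orbF => /eqP -> /eqP ->.
- have sameU' (m : U) : ~~ pred0 m -> prefU Ia m = prefU I' m by move=> _; apply: sameU.
  apply: (new_man_unique stable' stable_a sameU' sameW _ un1 in1 un2 in2) => p q.
  rewrite /Bad /= => /existsP [w /andP [pw /eqP eq_w]] /existsP [w' /andP [qw' /eqP eq_w']].
  by rewrite eq_w -eq_w' in pw; apply: (stable_woman_unique stable_a pw qw').
Qed.

Definition swapI (U W : finType) (I : SMI U W) : SMI W U := mkSMI (prefW I) (prefU I).
Definition swapM (A B : finType) (M : {set A * B}) : {set B * A} :=
  [set p | (p.2, p.1) \in M].

Lemma swapIK (U W : finType) (I : SMI U W) : swapI (swapI I) = I.
Proof. by case: I. Qed.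

Lemma in_swapM (A B : finType) (M : {set A * B}) a b : ((b, a) \in swapM M) = ((a, b) \in M).
Proof. by rewrite inE. Qed.

Lemma stable_swap (U W : finType) (I : SMI U W) M : stable I M -> stable (swapI I) (swapM M).
Proof.
move=> [[acc uniq_m uniq_w] noblock]; split; first split.
- by case=> w m; rewrite in_swapM => /acc; rewrite /acceptable andbC.
- by move=> w m m'; rewrite !in_swapM; apply: uniq_w.
- by move=> w w' m; rewrite !in_swapM; apply: uniq_m.
move=> w m [acc_wm des_w des_m]; apply: (noblock m w); split.
- by move: acc_wm; rewrite /acceptable andbC.
- case: des_m => [un | [w' [mw' pref]]]; last by right; exists w'; rewrite -in_swapM.
  by left => -[w' mw']; apply: un; exists w'; rewrite in_swapM.
- case: des_w => [un | [m' [m'w pref]]]; last by right; exists m'; rewrite -in_swapM.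
  by left => -[m' m'w]; apply: un; exists m'; rewrite in_swapM.
Qed.

Lemma ma_woman_swap (U W : finType) (I : SMI U W) w : ma_woman I w <-> ma_man (swapI I) w.
Proof.
split=> -[M [stableM [m mw]]]; exists (swapM M).
  by split; [exact: stable_swap | exists m; rewrite in_swapM].
by split; [rewrite -(swapIK I); exact: stable_swap | exists m; rewrite in_swapM].
Qed.

Theorem mainTheorem9 (U W : finType) (I' Ia : SMI U W) :
  wf_SMI I' -> wf_SMI Ia -> differ_in_one_agent I' Ia ->
  (forall m1 m2 : U,
      ~ ma_man I' m1 -> ma_man Ia m1 ->
      ~ ma_man I' m2 -> ma_man Ia m2 -> m1 = m2) /\
  (forall w1 w2 : W,
      ~ ma_woman I' w1 -> ma_woman Ia w1 ->
      ~ ma_woman I' w2 -> ma_woman Ia w2 -> w1 = w2).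
Proof.
move=> wf' _ diff; split; first exact: new_matched_man_unique.
move=> w1 w2; rewrite !ma_woman_swap.
apply: new_matched_man_unique; first by case: wf'.
by case: diff => [[a [h1 h2]] | [a [h1 h2]]]; [right | left]; exists a.
Qed.
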